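(* Let $\tau>1$, let $\kappa\ge3$ be an integer and let $x^\dagger\in\mathcal X$ satisfy $\bar k^\delta_{\mathrm{pr}}(x^\dagger)\ge\kappa$. Then on the event $\Omega_\kappa$, writing $k^\delta_{\mathrm{pr}}=k^\delta_{\mathrm{pr}}(x^\dagger)$, $$\sum_{j=k^\delta_{\mathrm{dp}}+1}^{k^\delta_{\mathrm{pr}}}(y^\dagger,u_j)^2\le\frac{(3\tau+1)^2}{4}\,k^\delta_{\mathrm{pr}}\,\delta^2,$$ where the sum is $0$ if $k^\delta_{\mathrm{dp}}\ge k^\delta_{\mathrm{pr}}$.
   Context: Setting: $K:\mathcal X\to\mathcal Y$ compact injective with dense range between infinite-dimensional real separable Hilbert spaces, singular system $(\sigma_j,v_j,u_j)$ ($(v_j),(u_j)$ orthonormal bases, $\sigma_1\ge\sigma_2\ge\dots>0$, $Kv_j=\sigma_ju_j$, $K^*u_j=\sigma_jv_j$); $y^\dagger=Kx^\dagger$, $\delta>0$, data $(y^\delta,u_j):=(y^\dagger,u_j)+\delta(Z,u_j)$ with real random variables $(Z,u_j)$. For $m\in\mathbb N$: $k^\delta_{\mathrm{dp}}(m):=\min\{k\in\{0,\dots,m\}:\sqrt{\sum_{j=k+1}^m(y^\delta,u_j)^2}\le\tau\sqrt m\,\delta\}$, $k^\delta_{\mathrm{dp}}:=\sup_{m\in\mathbb N}k^\delta_{\mathrm{dp}}(m)$. With $\min\emptyset=\infty$: $k^\delta_{\mathrm{pr}}(x^\dagger):=\min\{k\in\mathbb N_0:\sum_{j=1}^k(y^\delta-y^\dagger,u_j)^2\ge\sum_{j=k+1}^\infty(y^\dagger,u_j)^2\}$,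 $\bar k^\delta_{\mathrm{pr}}(x^\dagger):=\min\{k\in\mathbb N_0:\delta^2k\ge\sum_{j=k+1}^\infty(y^\dagger,u_j)^2\}$. With $\varepsilon_\tau:=\min\big(\frac{(\tau+1)^2}{4}-1,\frac13\big)$, $$\Omega_\kappa:=\Big\{\Big|\sum_{j=1}^m(y^\delta-y^\dagger,u_j)^2-m\delta^2\Big|\le\varepsilon_\tau m\delta^2\ \text{for all integers } m\ge\kappa/3\Big\}.$$ *)

From HB Require Import structures.
From mathcomp Require Import all_boot all_order all_algebra.
From mathcomp Require Import all_classical all_reals all_analysis.
Set Implicit Arguments. Unset Strict Implicit. Unset Printing Implicit Defensive.
Import Order.TTheory GRing.Theory Num.Theory.
Local Open Scope ring_scope.

(* Extended naturals N_0 \cup {oo}: [Some n] = n, [None] = oo. *)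

Lemma ex_asbool (P : nat -> Prop) : (exists n, P n) -> exists n, `[< P n >].
Proof. by case=> n Pn; exists n; apply/asboolP. Qed.

Definition omin (P : nat -> Prop) : option nat :=
  match pselect (exists n, P n) with
  | left h => Some (ex_minn (ex_asbool h))
  | right _ => None
  end.

Definition le_onat (a : nat) (o : option nat) : bool :=
  if o is Some n then (a <= n)%N else true.

Definition lt_onat (o : option nat) (j : nat) : bool :=
  if o is Some n then (n < j)%N else false.

Section Defs.
Variable R : realType.

Definition tailsq (b : nat -> R) (k : nat) : R :=
  limn (fun n => \sum_(k.+1 <= j < n) b j ^+ 2).

(* k^delta_dp(m); yd j = (y^delta, u_j) *)
Definition kdp_m (tau delta : R) (yd : nat -> R) (m : nat) : option nat :=
  omin (fun k => (k <= m)%N /\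
    Num.sqrt (\sum_(k.+1 <= j < m.+1) yd j ^+ 2)
      <= tau * Num.sqrt (m%:R) * delta).

(* k^delta_dp := sup_{m in N} k^delta_dp(m) (least upper bound in N_0 \cup {oo}) *)
Definition kdp (tau delta : R) (yd : nat -> R) : option nat :=
  omin (fun N => forall m k, (0 < m)%N -> kdp_m tau delta yd m = Some k -> (k <= N)%N).

(* k^delta_pr(x^dagger); b j = (y^dagger,u_j), e j = (y^delta - y^dagger, u_j) *)
Definition kpr (b e : nat -> R) : option nat :=
  omin (fun k => \sum_(1 <= j < k.+1) e j ^+ 2 >= tailsq b k).

Definition kpr_bar (delta : R) (b : nat -> R) : option nat :=
  omin (fun k => delta ^+ 2 * k%:R >= tailsq b k).

Definition eps_tau (tau : R) : R :=
  Num.min ((tau + 1) ^+ 2 / 4 - 1) (3^-1).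

(* the event Omega_kappa, evaluated at an outcome with noise e j = (y^delta - y^dagger,u_j) *)
Definition Omega (tau delta : R) (kappa : nat) (e : nat -> R) : Prop :=
  forall m : nat, (m%:R : R) >= kappa%:R / 3 ->
    `| \sum_(1 <= j < m.+1) e j ^+ 2 - m%:R * delta ^+ 2 |
      <= eps_tau tau * m%:R * delta ^+ 2.

End Defs.

From HB Require Import structures.
From mathcomp Require Import all_boot all_order all_algebra.
From mathcomp Require Import all_classical all_reals all_analysis.
From mathcomp Require Import ring lra zify.
Import Order.TTheory GRing.Theory Num.Theory numFieldNormedType.Exports.
Local Open Scope classical_set_scope.
Local Open Scope ring_scope.

(* On Omega_kappa the noise energy of the first m coefficients lies between
   (2/3) m delta^2 and min((tau+1)^2/4, 4/3) m delta^2 as soon as 3m >= kappa.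
   The lower bound makes k_pr finite; the upper bound together with
   kbar_pr >= kappa forces 3 k_pr >= kappa.  If k_dp < k_pr then
   k_dp(k_pr) <= k_dp, so on (k_dp, k_pr] the data have energy at most
   tau^2 k_pr delta^2 and the noise at most ((tau+1)/2)^2 k_pr delta^2; the
   triangle inequality in l^2 bounds the signal by ((3 tau + 1)/2)^2 k_pr delta^2. *)

Local Notation energy e m := (\sum_(1 <= j < m.+1) e j ^+ 2).

Lemma omin_someP {P : nat -> Prop} {n : nat} :
  omin P = Some n -> P n /\ forall k, P k -> (n <= k)%N.
Proof.
rewrite /omin; case: pselect => // h [<-].
case: ex_minnP => m /asboolP Pm H; split=> // k Pk; apply: H; exact/asboolP.
Qed.

Lemma omin_noneP {P : nat -> Prop} {k : nat} : omin P = None -> ~ P k.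
Proof. by rewrite /omin; case: pselect => // h _ Pk; apply: h; exists k. Qed.

Lemma omin_some_of (P : nat -> Prop) k : P k -> exists n, omin P = Some n.
Proof.
rewrite /omin; case: pselect => [h|h] Pk; first by eexists.
by exfalso; apply: h; exists k.
Qed.

Lemma big_nat_geq_cond (R : nmodType) (f : nat -> R) (a N : nat) :
  \sum_(a <= i < N) f i = \sum_(0 <= i < N | (a <= i)%N) f i.
Proof. by rewrite !big_geq_mkord; apply: eq_bigl => i; rewrite andbT. Qed.

Lemma ler_sum_nat_subpred (R : numDomainType) (f : nat -> R) (P Q : pred nat)
    (N M : nat) :
  (forall i, 0 <= f i) -> (N <= M)%N -> (forall i, (i < N)%N -> P i -> Q i) ->
  \sum_(0 <= i < N | P i) f i <= \sum_(0 <= i < M | Q i) f i.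
Proof.
move=> f_ge0 NM PQ; rewrite (big_nat_widen 0 N M) // big_mkcond /=.
rewrite [leRHS]big_mkcond /=; apply: ler_sum_nat => i /andP[_ iM].
case: (ltnP i N) => [iN|_]; rewrite ?andbT ?andbF; last by case: (Q i).
by case: (boolP (P i)) => Pi; [rewrite (PQ i iN Pi) | case: (Q i)].
Qed.

Lemma energy_le_mono (R : realDomainType) (e : nat -> R) (m m' : nat) :
  (m <= m')%N -> energy e m <= energy e m'.
Proof.
move=> mm'; rewrite !big_nat_geq_cond.
by apply: ler_sum_nat_subpred => [i||//]; [exact: sqr_ge0|].
Qed.

(* Weighted (Peter-Paul) form of the triangle inequality in l^2. *)
Lemma sum_sqrB_le (R : realFieldType) (I : Type) (r : seq I) (P : pred I)
    (y z : I -> R) (A C : R) :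
  0 < A -> 0 < C ->
  \sum_(i <- r | P i) y i ^+ 2 <= A ^+ 2 -> \sum_(i <- r | P i) z i ^+ 2 <= C ^+ 2 ->
  \sum_(i <- r | P i) (y i - z i) ^+ 2 <= (A + C) ^+ 2.
Proof.
move=> A_gt0 C_gt0 yA zC.
have peter_paul i :
    (y i - z i) ^+ 2 <= (1 + C / A) * y i ^+ 2 + (1 + A / C) * z i ^+ 2.
  rewrite -subr_ge0.
  have -> : (1 + C / A) * y i ^+ 2 + (1 + A / C) * z i ^+ 2 - (y i - z i) ^+ 2
      = (C * y i + A * z i) ^+ 2 / (A * C).
    by field; rewrite !gt_eqF.
  by rewrite divr_ge0 ?sqr_ge0 // ltW // mulr_gt0.
apply: le_trans (ler_sum _ (fun i _ => peter_paul i)) _.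
rewrite big_split /= -!mulr_sumr.
have -> : (A + C) ^+ 2 = (1 + C / A) * A ^+ 2 + (1 + A / C) * C ^+ 2.
  by field; rewrite !gt_eqF.
have wA : 0 <= 1 + C / A by rewrite addr_ge0 // ltW // divr_gt0.
have wC : 0 <= 1 + A / C by rewrite addr_ge0 // ltW // divr_gt0.
by rewrite lerD // ler_wpM2l.
Qed.

Lemma tailsq_le (R : realType) (b : nat -> R) (k k' : nat) : (k <= k')%N ->
  cvgn (fun n => \sum_(k.+1 <= j < n) b j ^+ 2) ->
  cvgn (fun n => \sum_(k'.+1 <= j < n) b j ^+ 2) ->
  tailsq b k' <= tailsq b k.
Proof.
move=> kk' cvg_k cvg_k'; apply: ler_lim => //; apply: nearW => N.
rewrite !big_nat_geq_cond; apply: ler_sum_nat_subpred => // [i|i _].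
  exact: sqr_ge0.
exact: leq_trans.
Qed.

Lemma cvgn_tail_sqr_mul (R : realType) (s x : nat -> R) (C : R) (k : nat) :
  (forall j, (0 < j)%N -> s j ^+ 2 <= C) -> cvgn (series (fun j => x j ^+ 2)) ->
  cvgn (fun n => \sum_(k.+1 <= j < n) (s j * x j) ^+ 2).
Proof.
move=> sC cvg_x.
have C_ge0 : 0 <= C := le_trans (sqr_ge0 _) (sC 1%N isT).
have series_incr : nondecreasing_seq (series (fun j => x j ^+ 2)).
  by apply: nondecreasing_series => n _ _; apply: sqr_ge0.
apply: nondecreasing_is_cvgn.
  by apply: nondecreasing_series => n _ _; apply: sqr_ge0.
exists (C * limn (series (fun j => x j ^+ 2))) => _ [N _ <-].
apply: le_trans (_ : \sum_(k.+1 <= j < N) C * x j ^+ 2 <= _).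
  apply: ler_sum_nat => j /andP[kj _]; rewrite exprMn ler_wpM2r ?sqr_ge0 //.
  exact: sC (leq_ltn_trans (leq0n k) kj).
rewrite -mulr_sumr ler_wpM2l //.
apply: le_trans (nondecreasing_cvgn_le series_incr cvg_x N).
rewrite /series /= big_nat_geq_cond.
by apply: (@ler_sum_nat_subpred _ _ _ xpredT) => [i||//]; [exact: sqr_ge0|].
Qed.

Section NoiseEnergy.
Context {R : realType} {tau delta : R} {kappa : nat} {e : nat -> R}.
Hypothesis Omega_e : Omega tau delta kappa e.

Lemma Omega_energy_near (m : nat) : (kappa <= 3 * m)%N ->
  `|energy e m - m%:R * delta ^+ 2| <= eps_tau tau * m%:R * delta ^+ 2.
Proof.
move=> km; apply: Omega_e.
by rewrite ler_pdivrMr // -natrM ler_nat mulnC.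
Qed.

Lemma eps_tau_le_third : eps_tau tau <= 3^-1.
Proof. by rewrite /eps_tau ge_min lexx orbT. Qed.

Lemma Omega_energy_ge (m : nat) : (kappa <= 3 * m)%N ->
  2 / 3 * m%:R * delta ^+ 2 <= energy e m.
Proof.
move=> /Omega_energy_near; rewrite ler_norml => /andP[lb _].
have md_ge0 : 0 <= m%:R * delta ^+ 2 by rewrite mulr_ge0 ?sqr_ge0.
have := eps_tau_le_third; nra.
Qed.

Lemma Omega_energy_le (m : nat) : (kappa <= 3 * m)%N ->
  energy e m <= 4 / 3 * m%:R * delta ^+ 2.
Proof.
move=> /Omega_energy_near; rewrite ler_norml => /andP[_ ub].
have md_ge0 : 0 <= m%:R * delta ^+ 2 by rewrite mulr_ge0 ?sqr_ge0.
have := eps_tau_le_third; nra.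
Qed.

Lemma Omega_energy_le_tau (m : nat) : (kappa <= 3 * m)%N ->
  energy e m <= ((tau + 1) / 2) ^+ 2 * m%:R * delta ^+ 2.
Proof.
move=> /Omega_energy_near; rewrite ler_norml => /andP[_ ub].
have md_ge0 : 0 <= m%:R * delta ^+ 2 by rewrite mulr_ge0 ?sqr_ge0.
have : eps_tau tau <= (tau + 1) ^+ 2 / 4 - 1 by rewrite /eps_tau ge_min lexx.
have -> : ((tau + 1) / 2) ^+ 2 = (tau + 1) ^+ 2 / 4 by field.
nra.
Qed.

End NoiseEnergy.

Section Oracle.
Context {R : realType} {delta : R} {b e : nat -> R}.

Lemma kpr_some (T c : R) (m0 : nat) : 0 < c ->
  (forall k, tailsq b k <= T) -> (forall m, (m0 <= m)%N -> c * m%:R <= energy e m) ->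
  exists n, kpr b e = Some n.
Proof.
move=> c_gt0 tail_T energy_ge.
pose N := Num.Def.archi_bound (Num.max 0 (T / c)).
apply: (@omin_some_of _ (m0 + N)%N).
apply: le_trans (tail_T _) (le_trans _ (energy_ge _ (leq_addr _ _))).
rewrite -ler_pdivrMl // natrD.
have : T / c < N%:R.
  by apply: le_lt_trans (archi_boundP _); rewrite ?le_max ?lexx ?orbT.
by rewrite mulrC; have := ler0n R m0; lra.
Qed.

Lemma tailsq_gt_of_le_kpr_bar {kappa k : nat} :
  le_onat kappa (kpr_bar delta b) -> (k < kappa)%N -> delta ^+ 2 * k%:R < tailsq b k.
Proof.
move=> kbar kk; rewrite ltNge; apply/negP => Pk.
case E: (kpr_bar delta b) kbar => [kb|] /= kbar; last exact: omin_noneP E Pk.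
by have [_ /(_ k Pk)] := omin_someP E; lia.
Qed.

(* If 3 k_pr < kappa, then the noise energy at k_pr is at most that at
   ceil(kappa/3), hence at most (kappa-1) delta^2, which is below the tail. *)
Lemma kpr_ge_third {kappa n : nat} : (3 <= kappa)%N ->
  (forall k k', (k <= k')%N -> tailsq b k' <= tailsq b k) ->
  le_onat kappa (kpr_bar delta b) ->
  (forall m, (kappa <= 3 * m)%N -> energy e m <= 4 / 3 * m%:R * delta ^+ 2) ->
  kpr b e = Some n -> (kappa <= 3 * n)%N.
Proof.
move=> kappa_ge3 tail_le kbar energy_le /omin_someP[Pn _].
rewrite leqNgt; apply/negP => small_n.
pose m0 := ((kappa + 2) %/ 3)%N.
have tail_gt := tailsq_gt_of_le_kpr_bar (k := kappa.-1) kbar ltac:(lia).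
have tail_n : tailsq b kappa.-1 <= tailsq b n by apply: tail_le; lia.
have energy_n : energy e n <= energy e m0 by apply: energy_le_mono; lia.
have energy_m0 : energy e m0 <= 4 / 3 * m0%:R * delta ^+ 2 by apply: energy_le; lia.
have m0_small : 4 * (m0%:R : R) <= 3 * kappa.-1%:R by rewrite -!natrM ler_nat; lia.
have := sqr_ge0 delta; nra.
Qed.

End Oracle.

Section Discrepancy.
Context {R : realType} {tau delta : R} {yd : nat -> R}.
Hypotheses (tau_ge0 : 0 <= tau) (delta_ge0 : 0 <= delta).

Lemma kdp_m_some (m : nat) : exists k, kdp_m tau delta yd m = Some k.
Proof.
apply: (omin_some_of _ m); split => //.
by rewrite big_geq // sqrtr0 !mulr_ge0 ?sqrtr_ge0.
Qed.

Lemma kdp_m_residual {m k : nat} : kdp_m tau delta yd m = Some k ->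
  \sum_(k.+1 <= j < m.+1) yd j ^+ 2 <= (tau * Num.sqrt m%:R * delta) ^+ 2.
Proof.
move=> /omin_someP[[_ residual] _].
have res_ge0 : 0 <= \sum_(k.+1 <= j < m.+1) yd j ^+ 2.
  by apply: sumr_ge0 => j _; apply: sqr_ge0.
rewrite -(sqr_sqrtr res_ge0) ler_sqr // nnegrE ?sqrtr_ge0 //.
by rewrite !mulr_ge0 ?sqrtr_ge0.
Qed.

End Discrepancy.

Lemma signal_le_of_kdp_lt (R : realType) (tau delta : R) (b e : nat -> R) (K n : nat) :
  0 < tau -> 0 < delta ->
  kdp tau delta (fun j => b j + e j) = Some K -> (K < n)%N ->
  energy e n <= ((tau + 1) / 2) ^+ 2 * n%:R * delta ^+ 2 ->
  \sum_(0 <= j < n.+1 | (K < j)%N) b j ^+ 2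
    <= (3 * tau + 1) ^+ 2 / 4 * n%:R * delta ^+ 2.
Proof.
move=> tau_gt0 delta_gt0 kdpK Kn energy_n.
have [k kdp_n] := kdp_m_some (yd := fun j => b j + e j) (ltW tau_gt0) (ltW delta_gt0) n.
have kK : (k <= K)%N := (omin_someP kdpK).1 n k (leq_ltn_trans (leq0n K) Kn) kdp_n.
have sqrt_n_gt0 : 0 < Num.sqrt (n%:R : R) by rewrite sqrtr_gt0 ltr0n; lia.
pose A := tau * Num.sqrt n%:R * delta.
pose C := (tau + 1) / 2 * Num.sqrt n%:R * delta.
have -> : (3 * tau + 1) ^+ 2 / 4 * n%:R * delta ^+ 2 = (A + C) ^+ 2.
  by rewrite /A /C -[n%:R in LHS](@sqr_sqrtr _ n%:R) ?ler0n //; field.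
under eq_bigr => j _ do rewrite -[b j](addrK (e j)).
apply: (@sum_sqrB_le _ _ _ _ (fun j => b j + e j)).
- by rewrite /A !mulr_gt0.
- by rewrite /C !mulr_gt0 //; lra.
- apply: le_trans _ (kdp_m_residual (ltW tau_gt0) (ltW delta_gt0) kdp_n).
  rewrite big_nat_geq_cond; apply: ler_sum_nat_subpred => // [j|j _]; last lia.
  exact: sqr_ge0.
- have -> : C ^+ 2 = ((tau + 1) / 2) ^+ 2 * n%:R * delta ^+ 2.
    by rewrite /C !exprMn sqr_sqrtr ?ler0n.
  apply: le_trans energy_n; rewrite big_nat_geq_cond.
  apply: ler_sum_nat_subpred => // [j|j _]; last lia.
  exact: sqr_ge0.
Qed.

Theorem mainTheorem12 (R : realType) (sigma xc : nat -> R)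
  (Omg : Type) (Zc : nat -> Omg -> R)
  (tau delta : R) (kappa : nat) :
  (forall j, (0 < j)%N -> 0 < sigma j) ->
  (forall i j, (0 < i)%N -> (i <= j)%N -> sigma j <= sigma i) ->
  sigma @ \oo --> 0 ->
  cvgn (series (fun j => xc j ^+ 2)) ->
  0 < delta -> 1 < tau -> (3 <= kappa)%N ->
  let b := fun j => sigma j * xc j in
  le_onat kappa (kpr_bar delta b) ->
  forall w : Omg,
    let e := fun j => delta * Zc j w in
    let yd := fun j => b j + e j in
    Omega tau delta kappa e ->
    exists2 n, kpr b e = Some n &
      \sum_(0 <= j < n.+1 | lt_onat (kdp tau delta yd) j) b j ^+ 2
        <= (3 * tau + 1) ^+ 2 / 4 * n%:R * delta ^+ 2.
Proof.
move=> sigma_gt0 sigma_noninc _ xc_cvg delta_gt0 tau_gt1 kappa_ge3 b kbar w e yd Omega_e.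
have tail_cvg k : cvgn (fun n => \sum_(k.+1 <= j < n) b j ^+ 2).
  apply: (@cvgn_tail_sqr_mul _ sigma xc (sigma 1%N ^+ 2)) => [j j_gt0|//].
  have := sigma_gt0 j j_gt0; have := sigma_noninc 1%N j isT j_gt0; nra.
have tail_le k k' : (k <= k')%N -> tailsq b k' <= tailsq b k.
  by move=> kk'; apply: tailsq_le kk' (tail_cvg k) (tail_cvg k').
have [n kprn] : exists n, kpr b e = Some n.
  apply: (kpr_some (tailsq b 0) (2 / 3 * delta ^+ 2) kappa).
  - by rewrite mulr_gt0 // exprn_gt0.
  - by move=> k; apply: tail_le.
  - by move=> m km; rewrite mulrAC; apply: (Omega_energy_ge Omega_e m); lia.
exists n => //.
have n_large := kpr_ge_third kappa_ge3 tail_le kbar (Omega_energy_le Omega_e) kprn.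
have bound_ge0 : 0 <= (3 * tau + 1) ^+ 2 / 4 * n%:R * delta ^+ 2.
  by apply: mulr_ge0; [apply: mulr_ge0; [apply: divr_ge0; [apply: sqr_ge0|]|]|apply: sqr_ge0].
case kdpK: (kdp tau delta yd) => [K|]; rewrite /lt_onat; last by rewrite big_pred0.
case: (leqP n K) => [nK|Kn].
  rewrite big_nat_cond big_pred0 // => j.
  by apply/negbTE/negP => /andP[/andP[_ ?] ?]; lia.
apply: signal_le_of_kdp_lt kdpK Kn _; [lra | by [] |].
by apply: (Omega_energy_le_tau Omega_e n); lia.
Qed.
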